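(* Fix a substate $j\in\{1,\dots,N\}$, a time $k$, a node $i\in\mathcal{V}\setminus\{j\}$ and $m\in\mathbb{N}_+$, and suppose $\tau^{(j)}_i[k]=m$. Then, under the rules of the freshness-index algorithm (for any choice of the gains $\mathbf{L}_1,\dots,\mathbf{L}_N$ and any initial estimates), there exist nodes $v(\tau)\in\mathcal{V}\setminus\{j\}$, $\tau=k-m,\dots,k-1$, such that $$\hat{\mathbf{z}}^{(j)}_i[k]=\mathbf{A}_{jj}^{m}\,\hat{\mathbf{z}}^{(j)}_j[k-m]+\sum_{q=1}^{j-1}\sum_{\tau=k-m}^{k-1}\mathbf{A}_{jj}^{\,k-\tau-1}\mathbf{A}_{jq}\,\hat{\mathbf{z}}^{(q)}_{v(\tau)}[\tau].$$
   Context: Graphs. Nodes $\mathcal{V}=\{1,\dots,N\}$. At each time $k\in\mathbb{N}=\{0,1,2,\dots\}$ there is a directed graph $\mathcal{G}[k]=(\mathcal{V},\mathcal{E}[k])$; $(i,j)\in\mathcal{E}[k]$ means node $i$ can send information to node $j$ at time $k$. $\mathcal{N}_i[k]=\{l\neq i:(l,i)\in\mathcal{E}[k]\}$ is the set of neighbors of $i$ at time $k$. System. $\mathbf{x}[k+1]=\mathbf{A}\mathbf{x}[k]$, $\mathbf{y}_i[k]=\mathbf{C}_i\mathbf{x}[k]$, $\mathbf{A}\in\mathbb{R}^{n\times n}$. An invertible $\mathbf{T}$ is fixed such that with $\mathbf{x}[k]=\mathbf{T}\mathbf{z}[k]$ one has $\mathbf{z}[k+1]=\bar{\mathbf{A}}\mathbf{z}[k]$,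 where $\mathbf{z}=[\mathbf{z}^{(1)T}\cdots\mathbf{z}^{(N)T}]^T$ with $\mathbf{z}^{(j)}\in\mathbb{R}^{n_j}$ (''substate $j$''), $\bar{\mathbf{A}}=\mathbf{T}^{-1}\mathbf{A}\mathbf{T}$ is block lower triangular with blocks $\mathbf{A}_{jq}$ ($\mathbf{A}_{jq}=0$ for $q>j$); and $\mathbf{C}_i\mathbf{T}=[\mathbf{C}_{i1}\ \cdots\ \mathbf{C}_{ii}\ 0\ \cdots\ 0]$. Node $j$ is called the source node of substate $j$. Freshness indices. For each substate $j$ and node $i$, node $i$ keeps $\tau^{(j)}_i[k]\in\{\omega\}\cup\mathbb{N}$, where $\omega$ is a special symbol. Initialization: $\tau^{(j)}_j[0]=0$, $\tau^{(j)}_i[0]=\omega$ for $i\neq j$. The source keeps $\tau^{(j)}_j[k]=0$ for all $k$. For $i\neq j$, let $\mathcal{M}^{(j)}_i[k]=\{l\in\mathcal{N}_i[k]:\tau^{(j)}_l[k]\neq\omega\}$. Case 1, $\tau^{(j)}_i[k]=\omega$: if $\mathcal{M}^{(j)}_i[k]\neq\emptyset$, let $u$ be any minimizer of $\tau^{(j)}_l[k]$ over $l\in\mathcal{M}^{(j)}_i[k]$, set $\tau^{(j)}_i[k+1]=\tau^{(j)}_u[k]+1$ and perform an ''adopt-$u$'' estimate update; otherwise set $\tau^{(j)}_i[k+1]=\omega$ and perform an ''open-loop'' estimate update. Case 2, $\tau^{(j)}_i[k]\neq\omega$: let $\mathcal{F}^{(j)}_i[k]=\{l\in\mathcal{M}^{(j)}_i[k]:\tau^{(j)}_l[k]<\tau^{(j)}_i[k]\}$;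 if nonempty, let $u$ be any minimizer of $\tau^{(j)}_l[k]$ over $\mathcal{F}^{(j)}_i[k]$, set $\tau^{(j)}_i[k+1]=\tau^{(j)}_u[k]+1$ and perform an adopt-$u$ update; otherwise set $\tau^{(j)}_i[k+1]=\tau^{(j)}_i[k]+1$ and perform an open-loop update. Estimates. Each node $i$ keeps $\hat{\mathbf{z}}_i[k]=[\hat{\mathbf{z}}^{(1)T}_i[k]\cdots\hat{\mathbf{z}}^{(N)T}_i[k]]^T$, with arbitrary initial value. Source update for substate $j$: $\hat{\mathbf{z}}^{(j)}_j[k+1]=(\mathbf{A}_{jj}-\mathbf{L}_j\mathbf{C}_{jj})\hat{\mathbf{z}}^{(j)}_j[k]+\sum_{q=1}^{j-1}(\mathbf{A}_{jq}-\mathbf{L}_j\mathbf{C}_{jq})\hat{\mathbf{z}}^{(q)}_j[k]+\mathbf{L}_j\mathbf{y}_j[k]$. Adopt-$u$ update at node $i\ne j$: $\hat{\mathbf{z}}^{(j)}_i[k+1]=\mathbf{A}_{jj}\hat{\mathbf{z}}^{(j)}_u[k]+\sum_{q=1}^{j-1}\mathbf{A}_{jq}\hat{\mathbf{z}}^{(q)}_i[k]$. Open-loop update at node $i\neq j$: $\hat{\mathbf{z}}^{(j)}_i[k+1]=\mathbf{A}_{jj}\hat{\mathbf{z}}^{(j)}_i[k]+\sum_{q=1}^{j-1}\mathbf{A}_{jq}\hat{\mathbf{z}}^{(q)}_i[k]$. These updates are carried out for every substate $j$ at every time $k$. *)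

From HB Require Import structures.
From mathcomp Require Import all_boot all_order all_algebra.
Set Implicit Arguments. Unset Strict Implicit. Unset Printing Implicit Defensive.
Import Order.TTheory GRing.Theory Num.Theory.
Local Open Scope ring_scope.

(* Conventions (0-indexed): nodes and substates are 'I_N.
   nd q  : dimension n_q of substate q.
   Ab j q: block A_{jq} of Abar = T^-1 A T  ('M_(n_j, n_q)).
   p i   : number of outputs of node i;  C i q : block C_{iq} of C_i T.
   E k l i : (l,i) is an edge of G[k] (l can send to i at time k).
   z k q : true substate z^(q)[k] (system written in z-coordinates, x = T z).
   tau k j i : freshness index tau^(j)_i[k]; None encodes the symbol omega.
   zh k i q : estimate \hat z^(q)_i[k]. *)

Definition block_structure (R : ringType) (N : nat) (nd p : 'I_N -> nat)
  (Ab : forall j q : 'I_N, 'M[R]_(nd j, nd q))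
  (C : forall i q : 'I_N, 'M[R]_(p i, nd q)) : Prop :=
  (forall j q : 'I_N, (j < q)%N -> Ab j q = 0) /\
  (forall i q : 'I_N, (i < q)%N -> C i q = 0).

Definition system_traj (R : ringType) (N : nat) (nd : 'I_N -> nat)
  (Ab : forall j q : 'I_N, 'M[R]_(nd j, nd q))
  (z : nat -> forall q : 'I_N, 'cV[R]_(nd q)) : Prop :=
  forall k (j : 'I_N), z k.+1 j = \sum_(q < N) Ab j q *m z k q.

(* y_i[k] = C_i x[k] = C_i T z[k]. *)
Definition output (R : ringType) (N : nat) (nd p : 'I_N -> nat)
  (C : forall i q : 'I_N, 'M[R]_(p i, nd q))
  (z : nat -> forall q : 'I_N, 'cV[R]_(nd q)) (k : nat) (i : 'I_N)
  : 'cV[R]_(p i) :=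
  \sum_(q < N) C i q *m z k q.

Definition is_minimizer (T : Type) (P : T -> Prop) (f : T -> nat) (u : T) : Prop :=
  P u /\ forall l, P l -> (f u <= f l)%N.

Definition open_loop_upd (R : ringType) (N : nat) (nd : 'I_N -> nat)
  (Ab : forall j q : 'I_N, 'M[R]_(nd j, nd q))
  (zh : nat -> 'I_N -> forall q : 'I_N, 'cV[R]_(nd q)) (k : nat) (i j : 'I_N)
  : 'cV[R]_(nd j) :=
  Ab j j *m zh k i j + \sum_(q < N | (q < j)%N) Ab j q *m zh k i q.

Definition adopt_upd (R : ringType) (N : nat) (nd : 'I_N -> nat)
  (Ab : forall j q : 'I_N, 'M[R]_(nd j, nd q))
  (zh : nat -> 'I_N -> forall q : 'I_N, 'cV[R]_(nd q)) (k : nat) (i j u : 'I_N)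
  : 'cV[R]_(nd j) :=
  Ab j j *m zh k u j + \sum_(q < N | (q < j)%N) Ab j q *m zh k i q.

(* A run of the freshness-index algorithm (any choice of minimizers,
   arbitrary initial estimates zh 0). *)
Definition fresh_run (R : ringType) (N : nat) (nd p : 'I_N -> nat)
  (Ab : forall j q : 'I_N, 'M[R]_(nd j, nd q))
  (C : forall i q : 'I_N, 'M[R]_(p i, nd q))
  (L : forall j : 'I_N, 'M[R]_(nd j, p j))
  (E : nat -> rel 'I_N)
  (z : nat -> forall q : 'I_N, 'cV[R]_(nd q))
  (tau : nat -> 'I_N -> 'I_N -> option nat)
  (zh : nat -> 'I_N -> forall q : 'I_N, 'cV[R]_(nd q)) : Prop :=
  (forall j i : 'I_N, tau 0%N j i = if i == j then Some 0%N else None) /\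
  (forall k (j : 'I_N), tau k j j = Some 0%N) /\
  (forall k (j : 'I_N),
     zh k.+1 j j = (Ab j j - L j *m C j j) *m zh k j j
                   + \sum_(q < N | (q < j)%N) (Ab j q - L j *m C j q) *m zh k j q
                   + L j *m output C z k j) /\
  (forall k (j i : 'I_N), i != j ->
     let M := fun l : 'I_N => l != i /\ E k l i /\ tau k j l <> None in
     let tv := fun l : 'I_N => odflt 0%N (tau k j l) in
     match tau k j i with
     | None =>
         ((exists l, M l) ->
            exists u, is_minimizer M tv u /\
              tau k.+1 j i = Some (tv u).+1 /\
              zh k.+1 i j = adopt_upd Ab zh k i j u) /\
         (~ (exists l, M l) ->
            tau k.+1 j i = None /\ zh k.+1 i j = open_loop_upd Ab zh k i j)
     | Some t =>
         let F := fun l : 'I_N => M l /\ (tv l < t)%N in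
         ((exists l, F l) ->
            exists u, is_minimizer F tv u /\
              tau k.+1 j i = Some (tv u).+1 /\
              zh k.+1 i j = adopt_upd Ab zh k i j u) /\
         (~ (exists l, F l) ->
            tau k.+1 j i = Some t.+1 /\ zh k.+1 i j = open_loop_upd Ab zh k i j)
     end).

From HB Require Import structures.
From mathcomp Require Import all_boot all_order all_algebra.
From Stdlib Require Import Classical.
Set Implicit Arguments. Unset Strict Implicit. Unset Printing Implicit Defensive.
Import Order.TTheory GRing.Theory Num.Theory.
Local Open Scope ring_scope.

(* A freshness index tau^(j)_i[k+1] = n+1 at a non-source node i
   always stems from a node w with tau^(j)_w[k] = n whose estimate of substate j
   is propagated by A_jj (adopt-w, or w = i for an open-loop update); the lower
   substates always enter through the node's own estimates.  Following these
   relays backwards m steps, index m decreases by one per step and only the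
   source carries index 0, so the chain reaches the source j exactly at time
   k - m, passing only through non-source nodes. *)

Section Unrolling.
Variables (R : pzRingType) (n : nat) (A : 'M[R]_n).

(* State reached at time k after running x[t+1] = A x[t] + c t for m steps
   from x[k - m] = x0. *)
Definition unrolled (x0 : 'cV[R]_n) (c : nat -> 'cV[R]_n) (k m : nat)
  : 'cV[R]_n :=
  A ^+ m *m x0 + \sum_(k - m <= t < k) A ^+ (k - t).-1 *m c t.

Lemma unrolled0 (x0 : 'cV[R]_n) (c : nat -> 'cV[R]_n) (k : nat) :
  unrolled x0 c k 0 = x0.
Proof. by rewrite /unrolled subn0 big_geq // expr0 mul1mx addr0. Qed.

(* One more step of the recurrence; the input sequence may be replaced by any
   sequence agreeing with it on the window already used. *)
Lemma unrolled_step (x0 : 'cV[R]_n) (c c' : nat -> 'cV[R]_n) (k m : nat) :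
  (forall t, (k - m <= t < k)%N -> c' t = c t) ->
  A *m unrolled x0 c k m + c' k = unrolled x0 c' k.+1 m.+1.
Proof.
move=> cc'.
have powS e : A *m A ^+ e = A ^+ e.+1 by rewrite exprS mulmxE.
rewrite /unrolled subSS mulmxDr mulmxA powS -addrA; congr (_ + _).
rewrite big_nat_recr ?leq_subr //= subSnn expr0 mul1mx mulmx_sumr.
congr (_ + _); apply: eq_big_nat => t /andP[tlo thi].
by rewrite cc' ?tlo // mulmxA powS subSn ?(ltnW thi) // prednK ?subn_gt0.
Qed.

Lemma unrolled_blocks (I : finType) (P : pred I) (d : I -> nat)
  (B : forall q, 'M[R]_(n, d q)) (y : nat -> forall q, 'cV[R]_(d q))
  (x0 : 'cV[R]_n) (k m : nat) :
  unrolled x0 (fun t => \sum_(q | P q) B q *m y t q) k m =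
  A ^+ m *m x0 + \sum_(q | P q) \sum_(k - m <= t < k)
                   A ^+ (k - t).-1 *m B q *m y t q.
Proof.
rewrite /unrolled exchange_big /=; congr (_ + _).
by apply: eq_bigr => t _; rewrite mulmx_sumr; apply: eq_bigr => q _; rewrite mulmxA.
Qed.

End Unrolling.

Section FreshnessRun.
Variables (R : nzRingType) (N : nat) (nd p : 'I_N -> nat).
Variables (Ab : forall j q : 'I_N, 'M[R]_(nd j, nd q))
  (C : forall i q : 'I_N, 'M[R]_(p i, nd q))
  (L : forall j : 'I_N, 'M[R]_(nd j, p j)) (E : nat -> rel 'I_N)
  (z : nat -> forall q : 'I_N, 'cV[R]_(nd q))
  (tau : nat -> 'I_N -> 'I_N -> option nat)
  (zh : nat -> 'I_N -> forall q : 'I_N, 'cV[R]_(nd q)).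
Hypothesis run : fresh_run Ab C L E z tau zh.
Variable j : 'I_N.

Lemma tau_init (i : 'I_N) : i != j -> tau 0 j i = None.
Proof. by case: run => init _ ij; rewrite init (negbTE ij). Qed.

Lemma tau_source (k : nat) : tau k j j = Some 0%N.
Proof. by case: run => _ []. Qed.

(* Relay step: a defined index n at time k+1 is one more than the index n' of
   a node w at time k whose estimate of substate j is propagated; the
   open-loop update is the case w = i. *)
Lemma tau_relay {k : nat} {i : 'I_N} {n : nat} :
  i != j -> tau k.+1 j i = Some n ->
  exists n' (w : 'I_N), [/\ n = n'.+1, tau k j w = Some n' &
                           zh k.+1 i j = adopt_upd Ab zh k i j w].
Proof.
case: run => _ [_ [_ nonsource]] ij tauS.
have adopted (u : 'I_N) : tau k j u <> None ->
    tau k.+1 j i = Some (odflt 0%N (tau k j u)).+1 ->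
    zh k.+1 i j = adopt_upd Ab zh k i j u ->
    exists n' (w : 'I_N), [/\ n = n'.+1, tau k j w = Some n' &
                             zh k.+1 i j = adopt_upd Ab zh k i j w].
  move=> uDef; rewrite tauS => -[->] zhE.
  by exists (odflt 0%N (tau k j u)), u; split=> //; case: (tau k j u) uDef.
move: (nonsource k j i ij) => /=; case tauI: (tau k j i) => [t|] [adopt open].
  case: (classic (exists l, (l != i /\ E k l i /\ tau k j l <> None) /\
                              (odflt 0%N (tau k j l) < t)%N)) => [F|noF].
    have [u [[[[_ [_ uDef]] _] _] [tauE zhE]]] := adopt F.
    exact: (adopted u uDef tauE zhE).
  have [tauE zhE] := open noF; move: tauS; rewrite tauE => -[<-].
  by exists t, i; rewrite tauI.
case: (classic (exists l, l != i /\ E k l i /\ tau k j l <> None)) => [M|noM].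
  have [u [[[_ [_ uDef]] _] [tauE zhE]]] := adopt M.
  exact: (adopted u uDef tauE zhE).
by have [tauE _] := open noM; rewrite tauE in tauS.
Qed.

Lemma tau_nonsource_pos (k : nat) (w : 'I_N) : w != j -> tau k j w <> Some 0%N.
Proof.
case: k => [|k] wj; first by rewrite tau_init.
by move=> /(tau_relay wj) [n' [w' []]].
Qed.

Definition lower_input (v : nat -> 'I_N) (t : nat) : 'cV[R]_(nd j) :=
  \sum_(q < N | (q < j)%N) Ab j q *m zh t (v t) q.

Lemma relay_unrolling (m k : nat) (i : 'I_N) :
  i != j -> tau k j i = Some m.+1 ->
  exists v : nat -> 'I_N,
    (forall t, (k - m.+1 <= t < k)%N -> v t != j) /\
    zh k i j = unrolled (Ab j j) (zh (k - m.+1)%N j j) (lower_input v) k m.+1.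
Proof.
elim: m k i => [|m IH] [|k] i ij; rewrite ?tau_init //;
  move=> /(tau_relay ij) [n' [w [[<-] tauw zhE]]].
- have wj : w = j.
    by apply/eqP; apply: contraT => /(@tau_nonsource_pos k w); rewrite tauw.
  exists (fun=> i); split=> //.
  rewrite zhE wj subSS subn0 -(unrolled_step _ _ (c := lower_input (fun=> i))) //.
  by rewrite unrolled0.
- have wj : w != j by apply/eqP => wE; move: tauw; rewrite wE tau_source.
  have [v [vj zhw]] := IH k w wj tauw.
  pose v' t := if t == k then i else v t.
  have vv' t : (k - m.+1 <= t < k)%N -> v' t = v t.
    by move=> /andP[_ tk]; rewrite /v' (ltn_eqF tk).
  exists v'; split.
    move=> t; rewrite subSS /v'; have [// | tk] := eqVneq t k => /andP[lo hi].
    by apply: vj; rewrite lo ltn_neqAle tk -ltnS hi.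
  rewrite zhE /adopt_upd zhw subSS -(unrolled_step _ _ (c := lower_input v) (c' := lower_input v'));
    last by move=> t /vv'; rewrite /lower_input => ->.
  by rewrite /lower_input /v' eqxx.
Qed.

End FreshnessRun.

Theorem lemma4 (R : realFieldType) (N : nat) (nd p : 'I_N -> nat)
  (Ab : forall j q : 'I_N, 'M[R]_(nd j, nd q))
  (C : forall i q : 'I_N, 'M[R]_(p i, nd q))
  (L : forall j : 'I_N, 'M[R]_(nd j, p j))
  (E : nat -> rel 'I_N)
  (z : nat -> forall q : 'I_N, 'cV[R]_(nd q))
  (tau : nat -> 'I_N -> 'I_N -> option nat)
  (zh : nat -> 'I_N -> forall q : 'I_N, 'cV[R]_(nd q))
  (Hblk : block_structure Ab C)
  (Hsys : system_traj Ab z)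
  (Hrun : fresh_run Ab C L E z tau zh)
  (j : 'I_N) (k : nat) (i : 'I_N) (m : nat)
  (Hij : i != j) (Hm : (0 < m)%N) (Htau : tau k j i = Some m) :
  exists v : nat -> 'I_N,
    (forall t : nat, (k - m <= t < k)%N -> v t != j) /\
    zh k i j = (Ab j j) ^+ m *m zh (k - m)%N j j
               + \sum_(q < N | (q < j)%N) \sum_(k - m <= t < k)
                   (Ab j j) ^+ (k - t).-1 *m Ab j q *m zh t (v t) q.
Proof.
case: m Hm Htau => [//|m] _ Htau.
have [v [vj zhE]] := relay_unrolling Hrun Hij Htau.
by exists v; split=> //; rewrite zhE unrolled_blocks.
Qed.
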